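(* Let $k\ge1$, let $N$ be a power of $2$, let $A \geq 2$, and let $f_0,\dots,f_k:[N]\to\mathbb{C}$ be bounded in magnitude by $1$, extended by zero outside $[N]$. Then $$ \sum_{n:\, N/A \le 2^n \le N}\ \sum_{j=0}^{N/2^n-1} 2^{-n}\Big| \sum_{x,t\in\mathbb{Z}} f_0(x)f_1(x+t)\cdots f_k(x+kt)\,\psi(t/2^n)\,\varphi(2^{-n}x-j)\Big| \leq C\, N^{1/2}(\log A) \inf_{0\le i\le k}\|f_i\|_{\ell^2([N])},$$ with $C$ depending only on $k,\psi,\varphi$.
   Context: $[N] := \{1,\dots,N\}$; $n$ ranges over nonnegative integers. Fix a smooth odd function $\psi:\mathbb{R}\to\mathbb{R}$ supported on $[-2,-1/2]\cup[1/2,2]$ with $\sum_{n\in\mathbb{Z}} 2^{-n}\psi(2^{-n}t) = \frac1t$ for $t \neq 0$, and a smooth $\varphi:\mathbb{R}\to\mathbb{R}$ supported on $[-1,1]$ with $\sum_{j \in \mathbb{Z}} \varphi(x-j) = 1$ for all $x \in \mathbb{R}$. *)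

From Stdlib Require Import Reals Lra Lia ZArith List.
Open Scope R_scope.

Definition Cx : Type := (R * R)%type.
Definition C0 : Cx := (0, 0).
Definition Cadd (a b : Cx) : Cx := (fst a + fst b, snd a + snd b).
Definition Cmul (a b : Cx) : Cx :=
  (fst a * fst b - snd a * snd b, fst a * snd b + snd a * fst b).
Definition Cscale (r : R) (a : Cx) : Cx := (r * fst a, r * snd a).
Definition Cmod (a : Cx) : R := sqrt (fst a ^ 2 + snd a ^ 2).

Fixpoint Cprod (k : nat) (g : nat -> Cx) : Cx :=
  match k with
  | O => g O
  | S k' => Cmul (Cprod k' g) (g (S k'))
  end.

(* integers a, a+1, ..., b (empty if b < a) *)
Definition Zrange (a b : Z) : list Z :=
  map (fun i => (a + Z.of_nat i)%Z) (seq 0 (Z.to_nat (b - a + 1))).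

Definition CsumZ (a b : Z) (g : Z -> Cx) : Cx :=
  fold_right Cadd C0 (map g (Zrange a b)).

Definition Rsum_lt (n : nat) (g : nat -> R) : R :=
  fold_right Rplus 0 (map g (seq 0 n)).

Definition RsumZ (a b : Z) (g : Z -> R) : R :=
  fold_right Rplus 0 (map g (Zrange a b)).

(* extension by zero outside [N] = {1,...,N} *)
Definition ext (N : Z) (f : Z -> Cx) (x : Z) : Cx :=
  if andb (1 <=? x)%Z (x <=? N)%Z then f x else C0.

(* C^infinity: a sequence of successive derivatives exists everywhere *)
Definition smooth (g : R -> R) : Prop :=
  exists d : nat -> R -> R, d O = g /\
    forall (n : nat) (x : R), derivable_pt_lim (d n) x (d (S n) x).

(* symmetric partial sums over m in [-M, M] of a Z-indexed real family *)
Definition symsum (g : Z -> R) (M : nat) : R :=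
  RsumZ (- Z.of_nat M) (Z.of_nat M) g.

Definition psi_hyp (psi : R -> R) : Prop :=
  smooth psi /\
  (forall t, psi (- t) = - psi t) /\
  (forall t, psi t <> 0 -> 1/2 <= Rabs t <= 2) /\
  (forall t, t <> 0 ->
     Un_cv (symsum (fun n => powerRZ 2 (- n) * psi (powerRZ 2 (- n) * t))) (1 / t)).

Definition phi_hyp (phi : R -> R) : Prop :=
  smooth phi /\
  (forall x, phi x <> 0 -> Rabs x <= 1) /\
  (forall x, Un_cv (symsum (fun j => phi (x - IZR j))) 1).

Definition l2norm (N : Z) (f : Z -> Cx) : R :=
  sqrt (RsumZ 1 N (fun x => Cmod (f x) ^ 2)).

(* inner sum over x, t in Z; f 0 supported in [1,N] and f 1 (x+t) forces
   |t| <= N-1, so (for k >= 1) the sum over x in [1,N], t in [-N,N] is the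
   full sum over Z x Z. *)
Definition inner (k : nat) (psi phi : R -> R) (f : nat -> Z -> Cx)
    (N : Z) (n : nat) (j : nat) : Cx :=
  CsumZ 1 N (fun x => CsumZ (- N) N (fun t =>
    Cscale (psi (IZR t / 2 ^ n) * phi (IZR x / 2 ^ n - INR j))
      (Cprod k (fun i => ext N (f i) (x + Z.of_nat i * t)%Z)))).

(* LHS with N = 2^m: n ranges over nat with N/A <= 2^n <= N *)
Definition lhs (k : nat) (psi phi : R -> R) (f : nat -> Z -> Cx)
    (m : nat) (A : R) : R :=
  let N := (2 ^ Z.of_nat m)%Z in
  Rsum_lt (S m) (fun n =>
    if Rle_dec (IZR N / A) (2 ^ n) then
      if Rle_dec (2 ^ n) (IZR N) then
        Rsum_lt (2 ^ (m - n))%nat (fun j =>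
          / 2 ^ n * Cmod (inner k psi phi f N n j))
      else 0
    else 0).

From Stdlib Require Import Reals ZArith Lra Lia List Psatz.
From Coquelicot Require Complex Rcomplements.
Open Scope R_scope.

(* No cancellation is needed.  Bounding every factor [f_l] with [l <> i] by 1,
   the term at scale [2^n] and position [j] is at most
   [sum_(x,t) |psi (t/2^n)| |phi (x/2^n - j)| |f_i (x + i t)|].  Each [x] meets
   at most three [j] because [phi] is supported in [[-1,1]], [psi (t/2^n)]
   vanishes unless [|t| <= 2^(n+1)], and every translate of [f_i] has l^1 norm
   at most [||f_i||_1 <= N^(1/2) ||f_i||_2].  Hence each scale contributes
   [O(N^(1/2) ||f_i||_2)], and at most [log2 A + 1] scales satisfy
   [N/A <= 2^n <= N]. *)

(* [Rsum_lt n g] and [RsumZ a b g] are convertible to [lsum (seq 0 n) g]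
   and [lsum (Zrange a b) g]. *)
Definition lsum {A : Type} (l : list A) (g : A -> R) : R :=
  fold_right Rplus 0 (map g l).

Section ListSums.
Context {A : Type}.
Implicit Types (l : list A) (g h : A -> R).

Lemma lsum_cons (a : A) l g : lsum (a :: l) g = g a + lsum l g.
Proof. reflexivity. Qed.

Lemma lsum_ext l g h : (forall x, In x l -> g x = h x) -> lsum l g = lsum l h.
Proof.
  induction l as [|a l IH]; intros E; [reflexivity|].
  rewrite !lsum_cons, E by now left. rewrite IH; [reflexivity|].
  intros; apply E; now right.
Qed.

Lemma lsum_le l g h : (forall x, In x l -> g x <= h x) -> lsum l g <= lsum l h.
Proof.
  induction l as [|a l IH]; intros H; [apply Rle_refl|].
  rewrite !lsum_cons. apply Rplus_le_compat; [apply H; now left|].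
  apply IH. intros; apply H; now right.
Qed.

Lemma lsum_const l c : lsum l (fun _ => c) = INR (length l) * c.
Proof.
  induction l as [|a l IH]; [simpl; unfold lsum; simpl; ring|].
  rewrite lsum_cons, IH. cbn [length]. rewrite S_INR. ring.
Qed.

Lemma lsum_nonneg l g : (forall x, In x l -> 0 <= g x) -> 0 <= lsum l g.
Proof.
  intros H. rewrite <- (Rmult_0_r (INR (length l))), <- lsum_const.
  now apply lsum_le.
Qed.

Lemma lsum_plus l g h : lsum l (fun x => g x + h x) = lsum l g + lsum l h.
Proof. induction l as [|a l IH]; [unfold lsum; simpl; ring|]. rewrite !lsum_cons, IH. ring. Qed.

Lemma lsum_scal_l l c g : lsum l (fun x => c * g x) = c * lsum l g.
Proof. induction l as [|a l IH]; [unfold lsum; simpl; ring|]. rewrite !lsum_cons, IH. ring. Qed.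

Lemma lsum_scal_r l c g : lsum l (fun x => g x * c) = lsum l g * c.
Proof. induction l as [|a l IH]; [unfold lsum; simpl; ring|]. rewrite !lsum_cons, IH. ring. Qed.

Lemma lsum_ge_elem l g y :
  In y l -> (forall x, In x l -> 0 <= g x) -> g y <= lsum l g.
Proof.
  induction l as [|a l IH]; intros Hy H; [destruct Hy|]. rewrite lsum_cons.
  assert (0 <= g a) by (apply H; now left).
  assert (0 <= lsum l g) by (apply lsum_nonneg; intros; apply H; now right).
  destruct Hy as [<-|Hy]; [lra|].
  enough (g y <= lsum l g) by lra. apply IH; auto. intros; apply H; now right.
Qed.

Lemma cauchy_schwarz l g : (forall x, In x l -> 0 <= g x) ->
  lsum l g <= sqrt (INR (length l)) * sqrt (lsum l (fun x => g x ^ 2)).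
Proof.
  intros Hg. set (S1 := lsum l g). set (S2 := lsum l (fun x => g x ^ 2)).
  assert (0 <= S1) by (apply lsum_nonneg; auto).
  assert (0 <= S2) by (apply lsum_nonneg; intros; nra).
  pose proof (pos_INR (length l)).
  rewrite <- sqrt_mult, <- (sqrt_pow2 S1) by auto. apply sqrt_le_1_alt.
  assert (Square : S1 ^ 2 = lsum l (fun x => lsum l (fun y => g x * g y))).
  { transitivity (lsum l (fun x => g x * S1)); [rewrite lsum_scal_r; fold S1; ring|].
    apply lsum_ext; intros. symmetry; apply lsum_scal_l. }
  assert (AMGM : S1 ^ 2 <= lsum l (fun x => lsum l (fun y => / 2 * g x ^ 2 + / 2 * g y ^ 2))).
  { rewrite Square. apply lsum_le; intros x _. apply lsum_le; intros y _.
    pose proof (pow2_ge_0 (g x - g y)). nra. }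
  rewrite (lsum_ext l _ (fun x => / 2 * g x ^ 2 * INR (length l) + / 2 * S2)) in AMGM.
  2:{ intros x _. rewrite lsum_plus, lsum_const, lsum_scal_l. fold S2. ring. }
  rewrite lsum_plus, lsum_scal_r, lsum_const, lsum_scal_l in AMGM. fold S2 in AMGM. nra.
Qed.

End ListSums.

Lemma lsum_swap {A B : Type} (l : list A) (l' : list B) (F : A -> B -> R) :
  lsum l (fun x => lsum l' (F x)) = lsum l' (fun y => lsum l (fun x => F x y)).
Proof.
  induction l as [|a l IH].
  - rewrite (lsum_ext l' _ (fun _ => 0)) by reflexivity. rewrite lsum_const.
    unfold lsum; simpl; ring.
  - rewrite lsum_cons, IH, <- lsum_plus. apply lsum_ext. reflexivity.
Qed.

Lemma lsum_seq_support_le (s K : nat) (h : nat -> R) (M lo hi : R) : 0 <= M ->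
  (forall i, In i (seq s K) -> 0 <= h i <= M) ->
  (forall i, In i (seq s K) -> h i <> 0 -> lo <= INR i <= hi) ->
  lsum (seq s K) h <= M * Rmax 0 (hi + 1 - lo).
Proof.
  revert s lo. induction K as [|K IH]; intros s lo HM Hb Hs.
  - unfold lsum; simpl. pose proof (Rmax_l 0 (hi + 1 - lo)). nra.
  - cbn [seq]. rewrite lsum_cons.
    assert (Hs0 : 0 <= h s <= M) by (apply Hb; now left).
    destruct (Req_dec (h s) 0) as [E|E].
    + rewrite E, Rplus_0_l. apply IH; auto; intros; [apply Hb|apply Hs]; auto; now right.
    + assert (lo <= INR s <= hi) by (apply Hs; auto; now left).
      assert (Rest : lsum (seq (S s) K) h <= M * Rmax 0 (hi + 1 - (INR s + 1))).
      { apply IH; auto; intros i Hi; [apply Hb; now right|].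
        intros Hne. apply in_seq in Hi. rewrite <- S_INR.
        split; [apply le_INR; lia|]. apply Hs; auto. right; apply in_seq; lia. }
      rewrite Rmax_right in Rest by lra. rewrite Rmax_right by lra. nra.
Qed.

Lemma Zrange_lsum (a b : Z) (g : Z -> R) :
  lsum (Zrange a b) g = lsum (seq 0 (Z.to_nat (b - a + 1))) (fun i => g (a + Z.of_nat i)%Z).
Proof. unfold lsum, Zrange. now rewrite map_map. Qed.

Lemma in_Zrange (a b y : Z) : In y (Zrange a b) <-> (a <= y <= b)%Z.
Proof.
  unfold Zrange. rewrite in_map_iff. split.
  - intros [i [<- Hi]]. apply in_seq in Hi. lia.
  - intros H. exists (Z.to_nat (y - a)). split; [lia|]. apply in_seq. lia.
Qed.

Lemma Zrange_length (a b : Z) : length (Zrange a b) = Z.to_nat (b - a + 1).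
Proof. unfold Zrange. now rewrite length_map, length_seq. Qed.

Lemma lsum_Zrange_support_le (a b : Z) (h : Z -> R) (M lo hi : R) : 0 <= M ->
  (forall y, 0 <= h y <= M) -> (forall y, h y <> 0 -> lo <= IZR y <= hi) ->
  lsum (Zrange a b) h <= M * Rmax 0 (hi + 1 - lo).
Proof.
  intros HM Hb Hs. rewrite Zrange_lsum.
  replace (hi + 1 - lo) with ((hi - IZR a) + 1 - (lo - IZR a)) by ring.
  apply lsum_seq_support_le; auto. intros i _ Hi. apply Hs in Hi.
  rewrite plus_IZR, <- INR_IZR_INZ in Hi. lra.
Qed.

(* Write the shifted sum as a double sum against the indicator of [z = x + c]:
   each [z] is hit by at most one [x]. *)
Lemma lsum_Zrange_shift_le (N c : Z) (G : Z -> R) :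
  (forall y, 0 <= G y) -> (forall y, ~ (1 <= y <= N)%Z -> G y = 0) ->
  lsum (Zrange 1 N) (fun x => G (x + c)%Z) <= lsum (Zrange 1 N) G.
Proof.
  intros Gp Gs.
  set (hit := fun z y : Z => if Z.eq_dec z y then 1 else 0).
  assert (hit_nonneg : forall z y, 0 <= G z * hit z y).
  { intros z y. unfold hit. destruct Z.eq_dec; pose proof (Gp z); lra. }
  transitivity (lsum (Zrange 1 N) (fun x => lsum (Zrange 1 N) (fun z => G z * hit z (x + c)%Z))).
  { apply lsum_le. intros x _.
    destruct (Z_le_dec 1 (x + c)); [destruct (Z_le_dec (x + c) N)|].
    - replace (G (x + c)%Z) with (G (x + c)%Z * hit (x + c)%Z (x + c)%Z)
        by (unfold hit; destruct Z.eq_dec; [ring|congruence]).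
      apply (lsum_ge_elem _ (fun z => G z * hit z (x + c)%Z)); auto.
      apply in_Zrange; lia.
    - rewrite Gs by lia. now apply lsum_nonneg.
    - rewrite Gs by lia. now apply lsum_nonneg. }
  rewrite lsum_swap. apply lsum_le. intros z _. rewrite lsum_scal_l.
  assert (Hits : lsum (Zrange 1 N) (fun x => hit z (x + c)%Z) <= 1).
  { eapply Rle_trans; [apply (lsum_Zrange_support_le _ _ _ 1 (IZR (z - c)) (IZR (z - c)))|].
    - lra.
    - intros; unfold hit; destruct Z.eq_dec; lra.
    - intros y Hy. unfold hit in Hy. destruct Z.eq_dec as [->|]; [|lra].
      replace (y + c - c)%Z with y by ring. lra.
    - rewrite Rmax_right; lra. }
  pose proof (Gp z). nra.
Qed.

(* [Cx], [Cadd], [Cmul] and [Cmod] are definitionally Coquelicot's [C],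
   [Cplus], [Cmult] and [Cmod]. *)
Lemma Cmod_ge0 (a : Cx) : 0 <= Cmod a.
Proof. apply sqrt_pos. Qed.

Lemma Cmod_C0 : Cmod C0 = 0.
Proof. exact Complex.Cmod_0. Qed.

Lemma Cmod_CsumZ (a b : Z) (g : Z -> Cx) :
  Cmod (CsumZ a b g) <= RsumZ a b (fun x => Cmod (g x)).
Proof.
  unfold CsumZ, RsumZ. induction (Zrange a b) as [|y l IH]; simpl.
  - rewrite Cmod_C0. lra.
  - eapply Rle_trans; [apply Complex.Cmod_triangle|]. apply Rplus_le_compat_l, IH.
Qed.

Lemma Cmod_Cscale (r : R) (a : Cx) : Cmod (Cscale r a) = Rabs r * Cmod a.
Proof.
  replace (Cscale r a) with (Complex.Cmult (Complex.RtoC r) a).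
  - now rewrite Complex.Cmod_mult, Complex.Cmod_R.
  - destruct a; unfold Cscale, Complex.Cmult, Complex.RtoC; simpl. f_equal; ring.
Qed.

Lemma Cmod_Cprod_le (k : nat) (g : nat -> Cx) (i : nat) : (i <= k)%nat ->
  (forall i, (i <= k)%nat -> Cmod (g i) <= 1) -> Cmod (Cprod k g) <= Cmod (g i).
Proof.
  revert i. induction k as [|k IH]; intros i Hi H; simpl.
  - replace i with O by lia. lra.
  - rewrite (Complex.Cmod_mult : forall a b, Cmod (Cmul a b) = Cmod a * Cmod b).
    pose proof (Cmod_ge0 (Cprod k g)). pose proof (Cmod_ge0 (g (S k))).
    assert (Hk : forall j, (j <= k)%nat -> Cmod (Cprod k g) <= Cmod (g j))
      by (intros; apply IH; auto; intros; apply H; lia).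
    destruct (Nat.eq_dec i (S k)) as [->|ne].
    + assert (Cmod (g O) <= 1) by (apply H; lia). specialize (Hk O (Nat.le_0_l k)). nra.
    + assert (Cmod (g (S k)) <= 1) by (apply H; lia). specialize (Hk i ltac:(lia)). nra.
Qed.

Lemma ext_in (N : Z) (g : Z -> Cx) (y : Z) : (1 <= y <= N)%Z -> ext N g y = g y.
Proof. intros H. unfold ext. now replace (_ && _)%bool with true by lia. Qed.

Lemma ext_out (N : Z) (g : Z -> Cx) (y : Z) : ~ (1 <= y <= N)%Z -> ext N g y = C0.
Proof. intros H. unfold ext. now replace (_ && _)%bool with false by lia. Qed.

Lemma Cmod_ext_le1 (N : Z) (g : Z -> Cx) (y : Z) :
  (forall x, (1 <= x <= N)%Z -> Cmod (g x) <= 1) -> Cmod (ext N g y) <= 1.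
Proof.
  intros Hg. destruct (Z_le_dec 1 y); [destruct (Z_le_dec y N)|].
  - rewrite ext_in by lia. apply Hg; lia.
  - rewrite ext_out, Cmod_C0 by lia. lra.
  - rewrite ext_out, Cmod_C0 by lia. lra.
Qed.

Lemma smooth_continuous (g : R -> R) : smooth g -> continuity g.
Proof.
  intros [d [Hd0 Hd]] x. apply derivable_continuous_pt. subst g.
  exists (d 1%nat x). apply Hd.
Qed.

Lemma continuous_bounded_support_bounded (g : R -> R) (c : R) :
  continuity g -> (forall x, g x <> 0 -> Rabs x <= c) ->
  exists M, forall x, Rabs (g x) <= M.
Proof.
  intros Hg Hs.
  destruct (continuity_ab_maj (fun y => Rabs (g y)) (- Rabs c) (Rabs c)) as [x0 [Hmax _]].
  { pose proof (Rabs_pos c); lra. }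
  { intros; apply (continuity_pt_comp g Rabs); [apply Hg|apply Rcontinuity_abs]. }
  exists (Rabs (g x0)). intros x.
  destruct (Req_dec (g x) 0) as [E|E].
  - rewrite E, Rabs_R0. apply Rabs_pos.
  - apply Hmax. apply Hs in E. apply Rcomplements.Rabs_le_between in E.
    pose proof (Rle_abs c). lra.
Qed.

Lemma Cmod_inner_le (k : nat) (psi phi : R -> R) (f : nat -> Z -> Cx) (N : Z)
    (n j i : nat) : (i <= k)%nat ->
  (forall i x, (i <= k)%nat -> (1 <= x <= N)%Z -> Cmod (f i x) <= 1) ->
  Cmod (inner k psi phi f N n j) <=
  RsumZ 1 N (fun x => RsumZ (- N) N (fun t =>
    Rabs (psi (IZR t / 2 ^ n)) * Rabs (phi (IZR x / 2 ^ n - INR j))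
    * Cmod (ext N (f i) (x + Z.of_nat i * t)))).
Proof.
  intros Hi Hf. unfold inner. eapply Rle_trans; [apply Cmod_CsumZ|].
  apply lsum_le; intros x _. eapply Rle_trans; [apply Cmod_CsumZ|].
  apply lsum_le; intros t _. rewrite Cmod_Cscale, Rabs_mult.
  apply Rmult_le_compat_l; [apply Rmult_le_pos; apply Rabs_pos|].
  apply (Cmod_Cprod_le _ (fun i => ext N (f i) (x + Z.of_nat i * t)%Z)); auto.
  intros i' Hi'. apply Cmod_ext_le1. intros; now apply Hf.
Qed.

Section OneScale.
Variables (psi phi : R -> R) (Mpsi Mphi : R).
Hypothesis psi_bound : forall t, Rabs (psi t) <= Mpsi.
Hypothesis phi_bound : forall x, Rabs (phi x) <= Mphi.
Hypothesis psi_support : forall t, psi t <> 0 -> Rabs t <= 2.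
Hypothesis phi_support : forall x, phi x <> 0 -> Rabs x <= 1.

Lemma Mpsi_nonneg : 0 <= Mpsi.
Proof. exact (Rle_trans _ _ _ (Rabs_pos _) (psi_bound 0)). Qed.

Lemma Mphi_nonneg : 0 <= Mphi.
Proof. exact (Rle_trans _ _ _ (Rabs_pos _) (phi_bound 0)). Qed.

Lemma phi_overlap (n : nat) (x : Z) (K : nat) :
  lsum (seq 0 K) (fun j => Rabs (phi (IZR x / 2 ^ n - INR j))) <= 3 * Mphi.
Proof.
  pose proof Mphi_nonneg.
  eapply Rle_trans.
  - apply (lsum_seq_support_le _ _ _ Mphi (IZR x / 2 ^ n - 1) (IZR x / 2 ^ n + 1)); auto.
    + intros j _. split; [apply Rabs_pos|apply phi_bound].
    + intros j _ Hj. assert (Hnear : Rabs (IZR x / 2 ^ n - INR j) <= 1).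
      { apply phi_support. intros E. apply Hj. now rewrite E, Rabs_R0. }
      apply Rcomplements.Rabs_le_between' in Hnear. lra.
  - rewrite Rmax_right; lra.
Qed.

Lemma psi_mass (n : nat) (N : Z) :
  lsum (Zrange (- N) N) (fun t => Rabs (psi (IZR t / 2 ^ n))) <= Mpsi * (4 * 2 ^ n + 1).
Proof.
  pose proof Mpsi_nonneg.
  assert (0 < 2 ^ n) by (apply pow_lt; lra).
  eapply Rle_trans.
  - apply (lsum_Zrange_support_le _ _ _ Mpsi (- (2 * 2 ^ n)) (2 * 2 ^ n)); auto.
    + intros t. split; [apply Rabs_pos|apply psi_bound].
    + intros t Ht. assert (Hnear : Rabs (IZR t / 2 ^ n) <= 2).
      { apply psi_support. intros E. apply Ht. now rewrite E, Rabs_R0. }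
      apply Rcomplements.Rabs_le_between in Hnear.
      replace (IZR t) with (IZR t / 2 ^ n * 2 ^ n) by (field; lra). nra.
  - rewrite Rmax_right; lra.
Qed.

Lemma weighted_triple_sum_le (G : Z -> R) (L : R) (N c : Z) (n K : nat) :
  (forall y, 0 <= G y) ->
  (forall t, lsum (Zrange 1 N) (fun x => G (x + c * t)%Z) <= L) ->
  lsum (seq 0 K) (fun j => lsum (Zrange 1 N) (fun x => lsum (Zrange (- N) N) (fun t =>
    Rabs (psi (IZR t / 2 ^ n)) * Rabs (phi (IZR x / 2 ^ n - INR j)) * G (x + c * t)%Z)))
  <= Mpsi * (4 * 2 ^ n + 1) * (3 * Mphi * L).
Proof.
  intros G0 Shift.
  set (w := fun t : Z => Rabs (psi (IZR t / 2 ^ n))).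
  set (v := fun (j : nat) (x : Z) => Rabs (phi (IZR x / 2 ^ n - INR j))).
  pose proof Mpsi_nonneg. pose proof Mphi_nonneg.
  assert (w0 : forall t, 0 <= w t) by (intros; apply Rabs_pos).
  assert (L0 : 0 <= L) by exact (Rle_trans _ _ _ (lsum_nonneg _ _ (fun _ _ => G0 _)) (Shift 0%Z)).
  rewrite lsum_swap.
  transitivity (lsum (Zrange 1 N) (fun x =>
    lsum (Zrange (- N) N) (fun t => w t * G (x + c * t)%Z * (3 * Mphi)))).
  { apply lsum_le. intros x _. rewrite lsum_swap. apply lsum_le. intros t _.
    rewrite (lsum_ext _ _ (fun j => w t * G (x + c * t)%Z * v j x)) by (intros; unfold w, v; ring).
    rewrite lsum_scal_l. apply Rmult_le_compat_l; [apply Rmult_le_pos; auto|].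
    apply phi_overlap. }
  rewrite lsum_swap.
  transitivity (lsum (Zrange (- N) N) w * (3 * Mphi * L)).
  { rewrite <- lsum_scal_r. apply lsum_le. intros t _.
    rewrite (lsum_ext _ _ (fun x => w t * (3 * Mphi) * G (x + c * t)%Z)) by (intros; ring).
    rewrite lsum_scal_l, <- (Rmult_assoc _ _ L). apply Rmult_le_compat_l; [|apply Shift].
    specialize (w0 t). nra. }
  apply Rmult_le_compat_r; [nra|]. apply psi_mass.
Qed.

Lemma scale_bound (k : nat) (f : nat -> Z -> Cx) (N : Z) (n K i : nat) :
  (i <= k)%nat ->
  (forall i x, (i <= k)%nat -> (1 <= x <= N)%Z -> Cmod (f i x) <= 1) ->
  lsum (seq 0 K) (fun j => / 2 ^ n * Cmod (inner k psi phi f N n j)) <=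
  15 * Mpsi * Mphi * RsumZ 1 N (fun x => Cmod (f i x)).
Proof.
  intros Hi Hf.
  set (G := fun y => Cmod (ext N (f i) y)).
  set (L1 := RsumZ 1 N (fun x => Cmod (f i x))).
  pose proof Mpsi_nonneg. pose proof Mphi_nonneg.
  assert (inv_pos : 0 < / 2 ^ n) by (apply Rinv_0_lt_compat, pow_lt; lra).
  assert (L1_0 : 0 <= L1) by (apply lsum_nonneg; intros; apply Cmod_ge0).
  assert (Shift : forall t, lsum (Zrange 1 N) (fun x => G (x + Z.of_nat i * t)%Z) <= L1).
  { intros t. replace L1 with (lsum (Zrange 1 N) G).
    - apply lsum_Zrange_shift_le; [intros; apply Cmod_ge0|].
      intros y Hy. unfold G. now rewrite ext_out, Cmod_C0.
    - apply lsum_ext. intros x Hx. apply in_Zrange in Hx. unfold G. now rewrite ext_in. }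
  transitivity (/ 2 ^ n * (Mpsi * (4 * 2 ^ n + 1) * (3 * Mphi * L1))).
  - eapply Rle_trans; [|apply Rmult_le_compat_l; [lra|]].
    2:{ apply (weighted_triple_sum_le G L1 N (Z.of_nat i) n K); [intros; apply Cmod_ge0|exact Shift]. }
    rewrite <- lsum_scal_l. apply lsum_le. intros j _.
    apply Rmult_le_compat_l; [lra|]. now apply Cmod_inner_le.
  - assert (/ 2 ^ n <= 1) by (rewrite <- Rinv_1; apply Rinv_le_contravar, pow_R1_Rle; lra).
    replace (/ 2 ^ n * (Mpsi * (4 * 2 ^ n + 1) * (3 * Mphi * L1)))
      with ((4 + / 2 ^ n) * (3 * (Mpsi * Mphi * L1))) by (field; apply pow_nonzero; lra).
    assert (0 <= Mpsi * Mphi * L1) by (apply Rmult_le_pos; [nra|auto]). nra.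
Qed.
End OneScale.

(* [2 ^ m / A <= 2 ^ n] means [n >= m - log2 A], so at most [log2 A + 1 <= 2 log2 A]
   scales contribute. *)
Lemma lsum_large_scales_le (m : nat) (A B : R) (h : nat -> R) :
  2 <= A -> (forall n, 0 <= h n <= B) ->
  lsum (seq 0 (S m)) (fun n => if Rle_dec (2 ^ m / A) (2 ^ n) then h n else 0)
  <= B * (2 * ln A / ln 2).
Proof.
  intros HA Hh.
  assert (B0 : 0 <= B) by (destruct (Hh O); lra).
  pose proof ln_lt_2.
  assert (ln2_le : ln 2 <= ln A) by (apply Rcomplements.ln_le; lra).
  set (log2A := ln A / ln 2).
  assert (log2A_ge1 : 1 <= log2A)
    by (unfold log2A; apply (Rmult_le_reg_r (ln 2)); [lra|]; field_simplify; lra).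
  eapply Rle_trans.
  - apply (lsum_seq_support_le _ _ _ B (INR m - log2A) (INR m)); auto.
    + intros n _. destruct Rle_dec; [apply Hh|lra].
    + intros n Hn Hne. apply in_seq in Hn. split; [|apply le_INR; lia].
      destruct Rle_dec as [Hlarge|]; [|congruence].
      apply Rcomplements.Rle_div_l, Rcomplements.ln_le in Hlarge; [|apply pow_lt|]; try lra.
      rewrite ln_mult, !ln_pow in Hlarge by (try apply pow_lt; lra).
      unfold log2A. apply (Rmult_le_reg_r (ln 2)); [lra|]. field_simplify; lra.
  - rewrite Rmax_right by lra. apply Rmult_le_compat_l; [lra|].
    unfold log2A in *. lra.
Qed.

Lemma l1_le_sqrt_l2norm (N : Z) (g : Z -> Cx) : (0 <= N)%Z ->
  RsumZ 1 N (fun x => Cmod (g x)) <= sqrt (IZR N) * l2norm N g.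
Proof.
  intros HN. eapply Rle_trans; [apply cauchy_schwarz; intros; apply Cmod_ge0|].
  rewrite Zrange_length, INR_IZR_INZ. replace (N - 1 + 1)%Z with N by ring.
  rewrite Z2Nat.id by exact HN. apply Rle_refl.
Qed.

Theorem lemma3p2 :
  forall (k : nat) (psi phi : R -> R),
    (1 <= k)%nat -> psi_hyp psi -> phi_hyp phi ->
    exists C : R,
      forall (m : nat) (A : R) (f : nat -> Z -> Cx),
        2 <= A ->
        (forall i x, (i <= k)%nat -> (1 <= x <= 2 ^ Z.of_nat m)%Z ->
           Cmod (f i x) <= 1) ->
        forall i, (i <= k)%nat ->
          lhs k psi phi f m A <=
          C * sqrt (IZR (2 ^ Z.of_nat m)) * ln A
            * l2norm (2 ^ Z.of_nat m) (f i).
Proof.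
  intros k psi phi _ [psi_smooth [_ [psi_supp _]]] [phi_smooth [phi_supp _]].
  assert (psi_supp2 : forall t, psi t <> 0 -> Rabs t <= 2) by (intros t Ht; now apply psi_supp).
  destruct (continuous_bounded_support_bounded psi 2) as [Mpsi psi_bound];
    [now apply smooth_continuous|exact psi_supp2|].
  destruct (continuous_bounded_support_bounded phi 1) as [Mphi phi_bound];
    [now apply smooth_continuous|exact phi_supp|].
  exists (30 * Mpsi * Mphi / ln 2).
  intros m A f HA Hf i Hi.
  set (N := (2 ^ Z.of_nat m)%Z) in *.
  assert (N0 : (0 <= N)%Z) by (apply Z.pow_nonneg; lia).
  assert (HN : IZR N = 2 ^ m) by (unfold N; now rewrite <- pow_IZR).
  set (Bnd := 15 * Mpsi * Mphi * (sqrt (IZR N) * l2norm N (f i))).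
  assert (Per_scale : forall n K, lsum (seq 0 K)
      (fun j => / 2 ^ n * Cmod (inner k psi phi f N n j)) <= Bnd).
  { intros n K.
    eapply Rle_trans; [exact (scale_bound psi phi Mpsi Mphi psi_bound phi_bound
                                psi_supp2 phi_supp k f N n K i Hi Hf)|].
    apply Rmult_le_compat_l; [|now apply l1_le_sqrt_l2norm].
    pose proof (Mpsi_nonneg psi Mpsi psi_bound).
    pose proof (Mphi_nonneg phi Mphi phi_bound). nra. }
  unfold lhs. fold N. rewrite HN.
  eapply Rle_trans; [apply (lsum_large_scales_le m A Bnd); auto|].
  - assert (Bnd0 : 0 <= Bnd) by exact (Per_scale O O).
    intros n. destruct Rle_dec; [split; [|apply Per_scale]|lra].
    apply lsum_nonneg. intros j _. apply Rmult_le_pos; [|apply Cmod_ge0].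
    left. apply Rinv_0_lt_compat, pow_lt. lra.
  - pose proof ln_lt_2. unfold Bnd. rewrite <- HN. apply Req_le. field. lra.
Qed.
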